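(* Let $G$ be a mixed abelian group with torsion subgroup $T$. Let $A$ be a direct summand of $G$ containing a subgroup $N$ as an essential subgroup. Suppose $G = H \oplus K$ is a decomposition with $N \subseteq H$, and let $\pi: G \to H$ be the standard projection along $K$. Then the restriction of $\pi$ to $A$ is injective, and $\pi(A)$ is a direct summand of $G$ and also a direct summand of $H$.
   Context: All groups are additively written abelian groups; a mixed group is one containing both non-zero elements of finite order and elements of infinite order. A subgroup $N$ of a group $A$ is essential in $A$ if $N \cap S \neq \{0\}$ for every non-zero subgroup $S$ of $A$. *)

From mathcomp Require Import all_boot all_algebra.
Set Implicit Arguments. Unset Strict Implicit. Unset Printing Implicit Defensive.
Import GRing.Theory.
Local Open Scope ring_scope.

Definition subgroup (G : zmodType) (S : G -> Prop) : Prop :=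
  S 0 /\ (forall x y, S x -> S y -> S (x - y)).

Definition subset_of (G : zmodType) (S M : G -> Prop) : Prop :=
  forall x, S x -> M x.

Definition direct_summand_in (G : zmodType) (S M : G -> Prop) : Prop :=
  subgroup S /\ subset_of S M /\
  exists B : G -> Prop, subgroup B /\ subset_of B M /\
    (forall x, S x -> B x -> x = 0) /\
    (forall m, M m -> exists s b, S s /\ B b /\ m = s + b).

Definition whole (G : zmodType) : G -> Prop := fun _ => True.

Definition direct_summand (G : zmodType) (S : G -> Prop) : Prop :=
  direct_summand_in S (@whole G).

Definition direct_decomposition (G : zmodType) (H K : G -> Prop) : Prop :=
  subgroup H /\ subgroup K /\ (forall x, H x -> K x -> x = 0) /\
  (forall g, exists h k, H h /\ K k /\ g = h + k).

Definition essential_in (G : zmodType) (N A : G -> Prop) : Prop :=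
  subgroup N /\ subset_of N A /\
  forall S : G -> Prop, subgroup S -> subset_of S A ->
    (exists x, S x /\ x <> 0) -> exists x, S x /\ N x /\ x <> 0.

Definition finite_order (G : zmodType) (x : G) : Prop :=
  exists n : nat, (0 < n)%N /\ x *+ n = 0.

Definition torsion_subgroup (G : zmodType) : G -> Prop := @finite_order G.

Definition mixed_group (G : zmodType) : Prop :=
  (exists x : G, x <> 0 /\ finite_order x) /\ (exists y : G, ~ finite_order y).

Definition img_set (G : zmodType) (f : G -> G) (A : G -> Prop) : G -> Prop :=
  fun y => exists a, A a /\ y = f a.

(* Let pA be the projection of G = A (+) B onto A.  Since pi fixes N <= H,
   the subgroups K and pi^-1(B) meet N trivially, hence meet the essential
   extension A of N trivially: pi is injective on A and pi(A) /\ B = 0.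
   For a in A, pA (pi a) = a - s a where s = pA o (1 - pi) is an endomorphism
   of A vanishing on N.  As A/N is torsion, s a has finite order; as every
   element of prime order of A lies in N, the order of s (s a) is smaller
   than that of s a, and induction on it shows that 1 - s maps A onto A.
   Hence G = pi(A) (+) B, and the modular law gives H = pi(A) (+) (B /\ H). *)

From HB Require Import structures.
From mathcomp Require Import all_boot all_algebra.
From Stdlib Require Import ClassicalEpsilon.
Set Implicit Arguments. Unset Strict Implicit. Unset Printing Implicit Defensive.
Import GRing.Theory.
Local Open Scope ring_scope.

Lemma subrACA (G : zmodType) (x y z t : G) : (x - y) - (z - t) = (x - z) - (y - t).
Proof. by rewrite !opprB addrACA [RHS]addrACA [- y - z]addrC. Qed.

Section Subgroups.
Variables (G : zmodType) (S : G -> Prop).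
Hypothesis sgS : subgroup S.

Lemma subgroup0 : S 0.
Proof. by case: sgS. Qed.

Lemma subgroupB x y : S x -> S y -> S (x - y).
Proof. by case: sgS => _; apply. Qed.

Lemma subgroupN x : S x -> S (- x).
Proof. by move=> Sx; rewrite -sub0r; apply: subgroupB => //; apply: subgroup0. Qed.

Lemma subgroupD x y : S x -> S y -> S (x + y).
Proof. by move=> Sx Sy; rewrite -[y]opprK; apply: subgroupB => //; apply: subgroupN. Qed.

Lemma subgroupMn x n : S x -> S (x *+ n).
Proof.
move=> Sx; elim: n => [|n IHn]; first by rewrite mulr0n; apply: subgroup0.
by rewrite mulrS; apply: subgroupD.
Qed.

Lemma subgroupMz x k : S x -> S (x *~ k).
Proof. by move=> Sx; case: k => n; [|apply: subgroupN]; apply: subgroupMn. Qed.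

Lemma subgroup_img (f : G -> G) : zmod_morphism f -> subgroup (img_set f S).
Proof.
move=> fB; have f0 : f 0 = 0 by have := fB 0 0; rewrite !subrr.
split; first by exists 0; split; [apply: subgroup0|rewrite f0].
by move=> _ _ [x [Sx ->]] [y [Sy ->]]; exists (x - y); split; [apply: subgroupB|rewrite fB].
Qed.

Lemma subgroup_preim (f : G -> G) : zmod_morphism f -> subgroup (fun x => S (f x)).
Proof.
move=> fB; have f0 : f 0 = 0 by have := fB 0 0; rewrite !subrr.
split; first by rewrite f0; apply: subgroup0.
by move=> x y Sfx Sfy; rewrite fB; apply: subgroupB.
Qed.

End Subgroups.

Lemma subgroupI (G : zmodType) (S T : G -> Prop) :
  subgroup S -> subgroup T -> subgroup (fun x => S x /\ T x).
Proof.
move=> sgS sgT; split; first by split; apply: subgroup0.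
by move=> x y [Sx Tx] [Sy Ty]; split; apply: subgroupB.
Qed.

Lemma subgroup_multiples (G : zmodType) (x : G) :
  subgroup (fun z => exists k : int, z = x *~ k).
Proof.
split; first by exists 0; rewrite mulr0z.
by move=> _ _ [i ->] [j ->]; exists (i - j); rewrite mulrzBr.
Qed.

Definition projection (G : zmodType) (S T : G -> Prop) (f : G -> G) : Prop :=
  forall g, S (f g) /\ T (g - f g).

Lemma exists_projection (G : zmodType) (S T : G -> Prop) :
  (forall g, exists s t, S s /\ T t /\ g = s + t) -> exists f, projection S T f.
Proof.
move=> decST.
have pick g : {s | S s /\ T (g - s)}.
  apply: constructive_indefinite_description.
  by have [s [t [Ss [Tt ->]]]] := decST g; exists s; rewrite [s + t]addrC addrK.
by exists (fun g => sval (pick g)) => g; exact: (svalP (pick g)).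
Qed.

Section Projection.
Variables (G : zmodType) (S T : G -> Prop) (f : G -> G).
Hypotheses (sgS : subgroup S) (sgT : subgroup T).
Hypotheses (meetST0 : forall x, S x -> T x -> x = 0) (projf : projection S T f).

Lemma projection_unique g s : S s -> T (g - s) -> f g = s.
Proof.
move=> Ss Tgs; have [Sfg Tgfg] := projf g.
apply/eqP; rewrite -subr_eq0; apply/eqP/meetST0; first exact: subgroupB.
have -> : f g - s = (g - s) - (g - f g) by rewrite opprB [RHS]addrC subrKA.
exact: subgroupB.
Qed.

Lemma projection_id x : S x -> f x = x.
Proof. by move=> Sx; apply: projection_unique; rewrite // subrr; apply: subgroup0. Qed.

Lemma projection_morph : zmod_morphism f.
Proof.
move=> x y; have [[Sfx Txfx] [Sfy Tyfy]] := (projf x, projf y).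
by apply: projection_unique; [apply: subgroupB|rewrite subrACA; apply: subgroupB].
Qed.

End Projection.

Section Essential.
Variables (G : zmodType) (A N : G -> Prop).
Hypotheses (sgA : subgroup A) (essNA : essential_in N A).

Let sgN : subgroup N := essNA.1.

Lemma essential_meet0 (S : G -> Prop) : subgroup S ->
  (forall x, N x -> S x -> x = 0) -> forall x, A x -> S x -> x = 0.
Proof.
move=> sgS meetNS0 x Ax Sx; have [_ [_ essN]] := essNA.
case: (eqVneq x 0) => [//|/eqP xn0].
have [z [[_ Sz] [Nz]]] : exists z, (A z /\ S z) /\ N z /\ z <> 0.
  by apply: essN => [|z []|]; [exact: subgroupI|done|exists x].
by case; apply: meetNS0.
Qed.

Lemma essential_multiple a : A a -> a != 0 -> exists k : int, N (a *~ k) /\ a *~ k != 0.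
Proof.
move=> Aa /eqP an0; have [_ [_ essN]] := essNA.
have [_ [[k ->] [Nak /eqP akn0]]] :
    exists z, (exists k : int, z = a *~ k) /\ N z /\ z <> 0.
  apply: essN => [|_ [k ->]|]; first exact: subgroup_multiples.
    exact: subgroupMz.
  by exists a; split => //; exists 1; rewrite mulr1z.
by exists k.
Qed.

Lemma essential_quotient_torsion a : A a -> exists2 n, (0 < n)%N & N (a *+ n).
Proof.
move=> Aa; case: (eqVneq a 0) => [->|an0].
  by exists 1%N => //; rewrite mul0rn; apply: subgroup0.
have [[[|n]|n] [Nak akn0]] := essential_multiple Aa an0.
- by rewrite mulr0z eqxx in akn0.
- by exists n.+1.
- by exists n.+1 => //; rewrite -[a *+ _]opprK; apply: subgroupN.
Qed.

Lemma essential_prime_order a p : A a -> prime p -> a *+ p = 0 -> N a.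
Proof.
move=> Aa p_pr ap0; case: (eqVneq a 0) => [->|an0]; first exact: subgroup0.
have [k [Nak akn0]] := essential_multiple Aa an0.
have apz0 : a *~ p = 0 by [].
have : coprimez p k.
  rewrite coprimezE prime_coprime // -dvdzE; apply: contra akn0 => /dvdzP [q ->].
  by rewrite mulrC mulrzA apz0 mul0rz.
case/coprimezP=> [[u v] /= uv1].
rewrite -[a]mulr1z -uv1 mulrzDr [u * _]mulrC [v * _]mulrC !mulrzA apz0 mul0rz add0r.
exact: subgroupMz.
Qed.

Section KillingEssential.
Variable f : G -> G.
Hypotheses (fB : zmod_morphism f) (fA : forall x, A x -> A (f x)).
Hypothesis fN : forall x, N x -> f x = 0.

#[local] HB.instance Definition _ := GRing.isZmodMorphism.Build G G f fB.

Lemma finite_order_image a : A a -> finite_order (f a).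
Proof.
move=> Aa; have [n n_gt0 Nan] := essential_quotient_torsion Aa.
by exists n; split => //; rewrite -raddfMn; apply: fN.
Qed.

Lemma id_minus_onto x : A x -> exists2 t, A t & t - f t = x.
Proof.
move=> Ax; have [n [n_gt0 fxn0]] := finite_order_image Ax.
elim/ltn_ind: n x Ax n_gt0 fxn0 => n IHn x Ax n_gt0 fxn0.
have [n_le1|n_gt1] := leqP n 1.
  have n1 : n = 1%N by apply/eqP; rewrite eqn_leq n_le1.
  by exists x => //; move: fxn0; rewrite n1 mulr1n => ->; rewrite subr0.
pose p := pdiv n; pose m := (n %/ p)%N.
have p_pr : prime p := pdiv_prime n_gt1.
have n_eq : n = (m * p)%N by rewrite divnK // pdiv_dvd.
have m_lt : (m < n)%N by apply: ltn_Pdiv; [apply: prime_gt1|].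
have m_gt0 : (0 < m)%N by rewrite divn_gt0 ?pdiv_gt0 // pdiv_leq.
(* [p] kills [f x *+ m], which therefore lies in [N]; so [m] kills [f (f x)]. *)
have Nfxm : N (f x *+ m).
  apply: (essential_prime_order _ p_pr); first by apply: subgroupMn => //; apply: fA.
  by rewrite -mulrnA -n_eq.
have [|t At tft] := IHn m m_lt (f x) (fA Ax) m_gt0; first by rewrite -raddfMn; apply: fN.
exists (x + t); first exact: subgroupD.
by rewrite raddfD opprD addrACA tft subrK.
Qed.

End KillingEssential.

End Essential.

Lemma direct_summand_in_subgroup (G : zmodType) (S H : G -> Prop) :
  subgroup H -> subset_of S H -> direct_summand S -> direct_summand_in S H.
Proof.
move=> sgH sSH [sgS [_ [B [sgB [_ [meetSB0 addSB]]]]]].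
do 2 split => //; exists (fun x => B x /\ H x).
split; first exact: subgroupI.
split; first by move=> x [].
split; first by move=> x Sx [Bx _]; apply: meetSB0.
move=> h Hh; have [s [b [Ss [Bb hsb]]]] := addSB h I.
exists s, b; do 3 split => //.
have -> : b = h - s by rewrite hsb [s + b]addrC addrK.
by apply: subgroupB => //; apply: sSH.
Qed.

Section ProjectedSummand.
Variables (G : zmodType) (A B H K N : G -> Prop) (pA pi : G -> G).
Hypotheses (sgA : subgroup A) (sgB : subgroup B).
Hypotheses (meetAB0 : forall x, A x -> B x -> x = 0) (projA : projection A B pA).
Hypotheses (sgH : subgroup H) (sgK : subgroup K).
Hypotheses (meetHK0 : forall x, H x -> K x -> x = 0) (projpi : projection H K pi).
Hypotheses (essNA : essential_in N A) (sNH : subset_of N H).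

Let pA_morph := projection_morph sgA sgB meetAB0 projA.
Let pi_morph := projection_morph sgH sgK meetHK0 projpi.
#[local] HB.instance Definition _ := GRing.isZmodMorphism.Build G G pA pA_morph.
#[local] HB.instance Definition _ := GRing.isZmodMorphism.Build G G pi pi_morph.

Lemma projection_inj_on a b : A a -> A b -> pi a = pi b -> a = b.
Proof.
move=> Aa Ab piab; apply/eqP; rewrite -subr_eq0; apply/eqP.
apply: (essential_meet0 sgA essNA sgK) => [x Nx||].
- exact/meetHK0/sNH.
- exact: subgroupB.
- by have [_] := projpi (a - b); rewrite pi_morph piab subrr subr0.
Qed.

Lemma projection_img_meet0 x : img_set pi A x -> B x -> x = 0.
Proof.
move=> [a [Aa ->]] Bpia.
suff -> : a = 0 by rewrite raddf0.
apply: (essential_meet0 sgA essNA (subgroup_preim sgB pi_morph)) Aa Bpia => z Nz.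
rewrite (projection_id sgH sgK meetHK0 projpi (sNH Nz)).
by apply: meetAB0; case: essNA => _ [sNA _]; apply: sNA.
Qed.

Let skew g := pA (g - pi g).

Let skew_morph : zmod_morphism skew.
Proof. by move=> x y; rewrite /skew (raddfB pi) subrACA raddfB. Qed.

Lemma projection_img_add g : exists a, A a /\ B (g - pi a).
Proof.
have skewN x : N x -> skew x = 0.
  by move=> Nx; rewrite /skew (projection_id sgH sgK meetHK0 projpi (sNH Nx)) subrr raddf0.
have [Apg Bgpg] := projA g.
have [a Aa askew] := id_minus_onto sgA essNA skew_morph (fun x _ => (projA _).1) skewN Apg.
exists a; split => //.
have -> : g - pi a = (g - pA g) + ((a - pi a) - skew a).
  by rewrite -askew [a - pi a - _]addrAC addrA subrK.
by apply: subgroupD => //; case: (projA (a - pi a)).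
Qed.

Lemma direct_summand_projection_img : direct_summand (img_set pi A).
Proof.
split; first exact: subgroup_img.
split=> //; exists B; split=> //; split=> //.
split; first exact: projection_img_meet0.
move=> g _; have [a [Aa Bga]] := projection_img_add g.
exists (pi a), (g - pi a); split; first by exists a.
by split => //; rewrite addrC subrK.
Qed.

End ProjectedSummand.

Theorem lemma2p4 (G : zmodType) (A N H K : G -> Prop) (pi : G -> G) :
  mixed_group G ->
  direct_summand A ->
  essential_in N A ->
  direct_decomposition H K ->
  subset_of N H ->
  (forall g, H (pi g) /\ K (g - pi g)) ->
  (forall a b, A a -> A b -> pi a = pi b -> a = b) /\
  direct_summand (img_set pi A) /\
  direct_summand_in (img_set pi A) H.
Proof.
move=> _ [sgA [_ [B [sgB [_ [meetAB0 addAB]]]]]] essNA [sgH [sgK [meetHK0 _]]] sNH projpi.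
have [pA projA] : exists pA, projection A B pA by apply: exists_projection => g; apply: addAB.
have dsum := direct_summand_projection_img sgA sgB meetAB0 projA sgH sgK meetHK0 projpi essNA sNH.
split; first exact: (projection_inj_on sgA sgH sgK meetHK0 projpi essNA sNH).
split=> //; apply: direct_summand_in_subgroup dsum => //.
by move=> _ [a [_ ->]]; case: (projpi a).
Qed.
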